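(* If $\Phi\in\bar\nabla_2$, then there exists $\theta\in(0,1)$ such that the function $t\mapsto\Phi(t^\theta)$ belongs to $\bar\nabla_2$.
   Context: $\bar{\mathcal{P}}$ is the set of all increasing (nondecreasing) $\Phi:[0,\infty]\to[0,\infty]$ such that, with $a(\Phi)=\sup\{t\ge0:\Phi(t)=0\}$ and $b(\Phi)=\inf\{t\ge0:\Phi(t)=\infty\}$ ($\sup\emptyset=0$, $\inf\emptyset=\infty$): $0\le a(\Phi)<\infty$, $0<b(\Phi)\le\infty$; $\lim_{t\to0+}\Phi(t)=\Phi(0)=0$; $\Phi$ is left continuous on $[0,b(\Phi))$; if $b(\Phi)=\infty$ then $\lim_{t\to\infty}\Phi(t)=\Phi(\infty)=\infty$; if $b(\Phi)<\infty$ then $\lim_{t\to b(\Phi)-0}\Phi(t)=\Phi(b(\Phi))$. $\bar\nabla_2$ is the set of $\Phi\in\bar{\mathcal{P}}$ for which there is a constant $k>1$ with $\Phi(t)\le\frac1{2k}\Phi(kt)$ for all $t>0$. *)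

(* A function Phi : [0,oo] -> [0,oo] is modelled as
   Phi : \bar R -> \bar R; only its values on [0, +oo] matter. *)
From HB Require Import structures.
From mathcomp Require Import all_boot all_order all_algebra.
From mathcomp Require Import all_classical all_reals all_analysis.
Set Implicit Arguments. Unset Strict Implicit. Unset Printing Implicit Defensive.
Import Order.TTheory GRing.Theory Num.Theory.
Import numFieldNormedType.Exports.
Local Open Scope classical_set_scope.
Local Open Scope ring_scope.
Local Open Scope ereal_scope.

Section Defs.
Variable R : realType.

(* a(Phi) = sup {t >= 0 : Phi t = 0}, with sup of the empty set = 0 *)
Definition a_of (Phi : \bar R -> \bar R) : \bar R :=
  maxe 0 (ereal_sup [set t | 0 <= t /\ Phi t = 0]).

Definition b_of (Phi : \bar R -> \bar R) : \bar R :=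
  ereal_inf [set t | 0 <= t /\ Phi t = +oo].

Definition in_Pbar (Phi : \bar R -> \bar R) : Prop :=
  (forall t, 0 <= t -> 0 <= Phi t) /\
  (forall s t, 0 <= s -> s <= t -> Phi s <= Phi t) /\
  a_of Phi < +oo /\
  0 < b_of Phi /\
  Phi 0 = 0 /\
  ((fun x : R => Phi x%:E) @ (0%R)^'+ --> 0) /\
  (forall t : R, (0 < t)%R -> t%:E < b_of Phi ->
     (fun x : R => Phi x%:E) @ t^'- --> Phi t%:E) /\
  (b_of Phi = +oo ->
     Phi +oo = +oo /\ ((fun x : R => Phi x%:E) @ +oo%R --> +oo)) /\
  (b_of Phi < +oo ->
     (fun x : R => Phi x%:E) @ (fine (b_of Phi))^'- --> Phi (b_of Phi)).

Definition in_nabla2 (Phi : \bar R -> \bar R) : Prop :=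
  in_Pbar Phi /\
  exists k : R, (1 < k)%R /\
    forall t : \bar R, 0 < t -> Phi t <= ((2 * k)^-1)%:E * Phi (k%:E * t).

End Defs.

From HB Require Import structures.
From mathcomp Require Import all_boot all_order all_algebra.
From mathcomp Require Import all_classical all_reals all_analysis.
From mathcomp Require Import ring lra.
Import Order.TTheory GRing.Theory Num.Theory.
Import numFieldNormedType.Exports.
Local Open Scope classical_set_scope.
Local Open Scope ring_scope.

(* For th > 0, t |-> t `^ th is a continuous increasing bijection of [0, +oo],
   so Phi (t `^ th) inherits every clause of the definition of Pbar, with a and b
   replaced by a `^ th^-1 and b `^ th^-1.  Iterating the nabla_2 inequality once
   gives Phi s <= (2k)^-2 Phi (k^2 s); for K = 2k^2 and th = ln (k^2) / ln K,
   which lies in (0, 1), we have K `^ th = k^2 and (2k)^-2 = (2K)^-1, which is the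
   nabla_2 inequality for Phi (t `^ th) with constant K. *)

Lemma cvg_within_near {T : Type} {U : topologicalType} (F : set_system T)
    {FF : Filter F} (f : T -> U) (A : set U) (l : U) :
  f @ F --> l -> (\forall x \near F, A (f x)) -> f @ F --> within A (nbhs l).
Proof.
move=> fl fA P /= /fl /= fP.
by apply: filterS2 fA fP => x Afx; apply.
Qed.

Section powR_limits.
Context {R : realType} {th : R}.
Hypothesis th_gt0 : 0 < th.

Lemma powR_cvg_left {t : R} : 0 < t -> x `^ th @[x --> t^'-] --> (t `^ th)^'-.
Proof.
move=> t_gt0; apply: cvg_within_near.
  have powR_cont : {for t, continuous (fun x : R => x `^ th)}.
    apply: differentiable_continuous; apply/derivable1_diffP.
    by apply: derivable_powR; rewrite in_itv /= t_gt0.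
  by apply: cvg_within_filter; apply: powR_cont.
near=> x; apply: gt0_ltr_powR; rewrite ?nnegrE ?ltW //.
all: by near: x; apply: nbhs_left_gt.
Unshelve. all: end_near. Qed.

Lemma powR_cvg0_right : x `^ th @[x --> 0^'+] --> 0^'+.
Proof.
apply: cvg_within_near; first exact: powR_cvg0.
by near=> x; apply: powR_gt0; near: x; apply: nbhs_right_gt.
Unshelve. all: end_near. Qed.

Lemma powR_cvgy : x `^ th @[x --> +oo] --> +oo.
Proof.
apply/cvgryPge => A; near=> x.
have A_le : A <= (`|A| `^ th^-1) `^ th.
  by rewrite -powRrM mulVf ?gt_eqF // powRr1 // ler_norm.
apply: (le_trans A_le); apply: (ge0_ler_powR (ltW th_gt0)); rewrite ?nnegrE ?powR_ge0 //.
all: by near: x; apply: nbhs_pinfty_ge; rewrite num_real.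
Unshelve. all: end_near. Qed.

End powR_limits.

Lemma powR_ln_div {R : realType} (a K : R) : 0 < a -> 1 < K -> K `^ (ln a / ln K) = a.
Proof.
move=> a_gt0 K_gt1; rewrite /powR gt_eqF ?(lt_trans ltr01) //.
by rewrite divfK ?lnK ?posrE // gt_eqF // ln_gt0.
Qed.

Lemma ln_div_ln_itv {R : realType} (a b : R) : 1 < a < b -> 0 < ln a / ln b < 1.
Proof.
move=> /andP[a_gt1 ab]; have b_gt1 := lt_trans a_gt1 ab.
have ln_ab : ln a < ln b by rewrite ltr_ln ?posrE ?(lt_trans ltr01).
rewrite divr_gt0 ?ln_gt0 //= ltr_pdivrMr ?ln_gt0 // mul1r //.
Qed.

Local Open Scope ereal_scope.

Section ereal_nneg_order_iso.
Context {R : realType} {f g : \bar R -> \bar R}.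
Hypotheses (f_ge0 : forall x, 0 <= x -> 0 <= f x)
           (g_ge0 : forall y, 0 <= y -> 0 <= g y).
Hypotheses (f_le : forall x y, 0 <= x -> x <= y -> f x <= f y)
           (g_le : forall x y, 0 <= x -> x <= y -> g x <= g y).
Hypotheses (fK : forall x, 0 <= x -> g (f x) = x)
           (gK : forall y, 0 <= y -> f (g y) = y).

Lemma ereal_inf_image_nneg (S : set (\bar R)) :
  S `<=` [set x | 0 <= x] -> ereal_inf (f @` S) = f (ereal_inf S).
Proof.
move=> S_ge0.
have infS_ge0 : 0 <= ereal_inf S by apply: le_ereal_inf_tmp => x /S_ge0.
have inffS_ge0 : 0 <= ereal_inf (f @` S).
  by apply: le_ereal_inf_tmp => _ [x /S_ge0 x_ge0 <-]; apply: f_ge0.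
apply/eqP; rewrite eq_le; apply/andP; split.
- rewrite -(gK _ inffS_ge0); apply: f_le; first exact: g_ge0.
  apply: le_ereal_inf_tmp => x Sx; rewrite -(fK _ (S_ge0 _ Sx)).
  by apply: g_le => //; apply: ereal_inf_lbound; exists x.
- apply: le_ereal_inf_tmp => _ [x Sx <-].
  by apply: f_le => //; apply: ereal_inf_lbound.
Qed.

Lemma ereal_sup_image_nneg (S : set (\bar R)) :
  S `<=` [set x | 0 <= x] -> S !=set0 -> ereal_sup (f @` S) = f (ereal_sup S).
Proof.
move=> S_ge0 [x0 Sx0].
have supS_ge0 : 0 <= ereal_sup S.
  by apply: le_trans (S_ge0 _ Sx0) _; apply: ereal_sup_ubound.
have supfS_ge0 : 0 <= ereal_sup (f @` S).
  apply: le_trans (f_ge0 _ (S_ge0 _ Sx0)) _.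
  by apply: ereal_sup_ubound; exists x0.
apply/eqP; rewrite eq_le; apply/andP; split.
- apply: ge_ereal_sup => _ [x Sx <-].
  by apply: f_le; [exact: S_ge0 | exact: ereal_sup_ubound].
- rewrite -(gK _ supfS_ge0); apply: f_le => //.
  apply: ge_ereal_sup => x Sx; rewrite -(fK _ (S_ge0 _ Sx)).
  apply: g_le; first exact/f_ge0/S_ge0.
  by apply: ereal_sup_ubound; exists x.
Qed.

End ereal_nneg_order_iso.

Section poweR_inverse.
Context {R : realType} {th : R} (th_neq0 : th != 0%R).

Lemma powRKV (s : R) : (0 <= s -> (s `^ th^-1) `^ th = s)%R.
Proof. by move=> s_ge0; rewrite -powRrM mulVf // powRr1. Qed.

Lemma poweRK (x : \bar R) : 0 <= x -> (x `^ th) `^ th^-1 = x.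
Proof. by move=> x_ge0; rewrite -poweRrM mulfV // poweRe1. Qed.

Lemma poweRKV (x : \bar R) : 0 <= x -> (x `^ th^-1) `^ th = x.
Proof. by move=> x_ge0; rewrite -poweRrM mulVf // poweRe1. Qed.

Lemma nneg_poweR_preimage (P : \bar R -> Prop) :
  [set t | 0 <= t /\ P (t `^ th)] = (poweR^~ th^-1%R) @` [set u | 0 <= u /\ P u].
Proof.
apply/seteqP; split.
- move=> t [t_ge0 Pt]; exists (t `^ th); last exact: poweRK.
  by split=> //; apply: poweR_ge0.
- by move=> _ [u [u_ge0 Pu] <-]; split; [exact: poweR_ge0 | rewrite poweRKV].
Qed.

End poweR_inverse.

Lemma nneg_ler_poweR {R : realType} {r : R} : (0 <= r)%R ->
  forall x y : \bar R, 0 <= x -> x <= y -> x `^ r <= y `^ r.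
Proof.
move=> r_ge0 x y x_ge0 xy; apply: gt0_ler_poweR; rewrite ?in_itv /= ?leey ?andbT //.
exact: le_trans xy.
Qed.

Lemma nneg_ltr_poweR {R : realType} {r : R} : (0 < r)%R ->
  forall x y : \bar R, 0 <= x -> x < y -> x `^ r < y `^ r.
Proof.
move=> r_gt0 x y x_ge0 xy; rewrite ltNge; apply/negP => yx.
have r_neq0 : r != 0%R by rewrite gt_eqF.
have : y `^ r `^ r^-1 <= x `^ r `^ r^-1.
  apply: nneg_ler_poweR => //; [by rewrite invr_ge0 ltW | exact: poweR_ge0].
have y_ge0 : 0 <= y by apply: le_trans x_ge0 (ltW xy).
by rewrite !poweRK // leNgt xy.
Qed.

Lemma ereal_inf_poweR {R : realType} {r : R} (S : set (\bar R)) : (0 < r)%R ->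
  S `<=` [set x | 0 <= x] -> ereal_inf ((poweR^~ r) @` S) = ereal_inf S `^ r.
Proof.
move=> r_gt0; have r_neq0 := lt0r_neq0 r_gt0.
apply: (ereal_inf_image_nneg (fun x _ => poweR_ge0 x r) (fun y _ => poweR_ge0 y r^-1)
  (nneg_ler_poweR (ltW r_gt0)) _ (poweRK r_neq0) (poweRKV r_neq0)).
by apply: nneg_ler_poweR; rewrite invr_ge0 ltW.
Qed.

Lemma ereal_sup_poweR {R : realType} {r : R} (S : set (\bar R)) : (0 < r)%R ->
  S `<=` [set x | 0 <= x] -> S !=set0 ->
  ereal_sup ((poweR^~ r) @` S) = ereal_sup S `^ r.
Proof.
move=> r_gt0; have r_neq0 := lt0r_neq0 r_gt0.
apply: (ereal_sup_image_nneg (fun x _ => poweR_ge0 x r)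
  (nneg_ler_poweR (ltW r_gt0)) _ (poweRK r_neq0) (poweRKV r_neq0)).
by apply: nneg_ler_poweR; rewrite invr_ge0 ltW.
Qed.

Lemma b_of_ge0 {R : realType} (F : \bar R -> \bar R) : 0 <= b_of F.
Proof. by apply: le_ereal_inf_tmp => t []. Qed.

Lemma a_ofE {R : realType} (F : \bar R -> \bar R) :
  F 0 = 0 -> a_of F = ereal_sup [set t | 0 <= t /\ F t = 0].
Proof. by move=> F0; apply/max_idPr; apply: ereal_sup_ubound. Qed.

Section comp_poweR.
Variables (R : realType) (Phi : \bar R -> \bar R) (th : R).
Hypothesis th_gt0 : (0 < th)%R.
Local Notation Psi := (fun t : \bar R => Phi (t `^ th)).

Let th_neq0 : th != 0%R. Proof. exact: lt0r_neq0. Qed.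
Let thV_gt0 : (0 < th^-1)%R. Proof. by rewrite invr_gt0. Qed.

Lemma b_of_comp_poweR : b_of Psi = b_of Phi `^ th^-1.
Proof.
rewrite /b_of (nneg_poweR_preimage th_neq0 (fun u => Phi u = +oo)).
by apply: ereal_inf_poweR => // x [].
Qed.

Lemma b_of_poweR_comp : b_of Phi = b_of Psi `^ th.
Proof. by rewrite b_of_comp_poweR poweRKV // b_of_ge0. Qed.

Lemma a_of_comp_poweR : Phi 0 = 0 -> a_of Psi = a_of Phi `^ th^-1.
Proof.
move=> Phi0; rewrite !a_ofE ?poweR0r //.
rewrite (nneg_poweR_preimage th_neq0 (fun u => Phi u = 0)).
by apply: ereal_sup_poweR => [//|x []|]; last by exists 0.
Qed.

Lemma comp_poweR_EFin :
  (fun x : R => Psi x%:E) = (fun y : R => Phi y%:E) \o (@powR R)^~ th.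
Proof. by []. Qed.

Lemma lt_b_of_comp_poweR (t : R) :
  (0 <= t)%R -> t%:E < b_of Psi -> (t `^ th)%:E < b_of Phi.
Proof.
by move=> t_ge0 tb; rewrite b_of_poweR_comp -poweR_EFin; apply: nneg_ltr_poweR.
Qed.

Lemma comp_poweR_cvg_left_b_of : 0 < b_of Phi ->
  (b_of Phi < +oo ->
    (fun x : R => Phi x%:E) @ (fine (b_of Phi))^'- --> Phi (b_of Phi)) ->
  b_of Psi < +oo ->
    (fun x : R => Psi x%:E) @ (fine (b_of Psi))^'- --> Psi (b_of Psi).
Proof.
move=> b_gt0 Phi_cvg_b bPsi_lty.
have bPhi_lty : b_of Phi < +oo by rewrite b_of_poweR_comp poweR_lty.
move: (Phi_cvg_b bPhi_lty) b_gt0 b_of_comp_poweR.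
case: (b_of Phi) bPhi_lty => [beta _| //| //] Phi_cvg_beta.
rewrite lte_fin => beta_gt0 ->; rewrite /= comp_poweR_EFin powRKV ?ltW //.
have := powR_cvg_left th_gt0 (powR_gt0 th^-1 beta_gt0).
by rewrite powRKV ?ltW // => powR_cvg; apply: cvg_comp powR_cvg Phi_cvg_beta.
Qed.

Lemma in_Pbar_comp_poweR : in_Pbar Phi -> in_Pbar Psi.
Proof.
move=> [Phi_ge0 [Phi_le [a_lty [b_gt0 [Phi0 [Phi_cvg0 [Phi_left [Phi_by Phi_b]]]]]]]].
split; first by move=> t _; apply/Phi_ge0/poweR_ge0.
split.
  move=> s t s_ge0 st; apply: Phi_le; first exact: poweR_ge0.
  exact: nneg_ler_poweR (ltW th_gt0) _ _ s_ge0 st.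
split; first by rewrite a_of_comp_poweR // poweR_lty.
split; first by rewrite b_of_comp_poweR poweR_gt0.
split; first by rewrite poweR0r.
split.
  by rewrite comp_poweR_EFin; apply: cvg_comp (powR_cvg0_right th_gt0) Phi_cvg0.
split.
  move=> t t_gt0 tb; rewrite comp_poweR_EFin.
  apply: cvg_comp (powR_cvg_left th_gt0 t_gt0) (Phi_left _ (powR_gt0 _ t_gt0) _).
  exact: lt_b_of_comp_poweR (ltW t_gt0) tb.
split; last exact: comp_poweR_cvg_left_b_of.
move=> bPsi_eqy; have := b_of_poweR_comp; rewrite bPsi_eqy poweRyr //.
move=> /Phi_by[Phiy Phi_cvgy]; split=> //.
by rewrite comp_poweR_EFin; apply: cvg_comp (powR_cvgy th_gt0) Phi_cvgy.
Qed.

End comp_poweR.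

Definition dilation_ineq {R : realType} (Phi : \bar R -> \bar R) (c k : R) : Prop :=
  forall t, 0 < t -> Phi t <= c%:E * Phi (k%:E * t).

Lemma dilation_ineq_sqr {R : realType} (Phi : \bar R -> \bar R) (c k : R) :
  (0 <= c)%R -> (0 < k)%R -> dilation_ineq Phi c k ->
  dilation_ineq Phi (c * c) (k * k).
Proof.
move=> c_ge0 k_gt0 Phi_dil t t_gt0; apply: le_trans (Phi_dil t t_gt0) _.
rewrite !EFinM -!muleA; apply: lee_wpmul2l; first by rewrite lee_fin.
by apply: Phi_dil; apply: mule_gt0; rewrite ?lte_fin.
Qed.

Lemma dilation_ineq_comp_poweR {R : realType} {Phi : \bar R -> \bar R} {c k K th : R} :
  (0 < K)%R -> (K `^ th = k)%R -> dilation_ineq Phi c k ->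
  dilation_ineq (fun t => Phi (t `^ th)) c K.
Proof.
move=> K_gt0 Kth Phi_dil t t_gt0.
rewrite poweRM ?lee_fin ?(ltW K_gt0) ?(ltW t_gt0) // poweR_EFin Kth.
by apply: Phi_dil; apply: poweR_gt0.
Qed.

Theorem lemma4p5 (R : realType) (Phi : \bar R -> \bar R) :
  in_nabla2 Phi ->
  exists theta : R, (0 < theta < 1)%R /\
    in_nabla2 (fun t : \bar R => Phi (t `^ theta)).
Proof.
move=> [Phi_Pbar [k [k_gt1 Phi_dil]]].
pose K := (2 * (k * k))%R.
have k_gt0 : (0 < k)%R by apply: lt_trans k_gt1.
have kk_gt1 : (1 < k * k)%R by nra.
have kk_ltK : (k * k < K)%R by rewrite /K; lra.
have /andP[th_gt0 th_lt1] : (0 < ln (k * k) / ln K < 1)%R.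
  by apply: ln_div_ln_itv; rewrite kk_gt1.
exists (ln (k * k) / ln K)%R; split; first by rewrite th_gt0.
split; first exact: in_Pbar_comp_poweR.
exists K; split; first lra.
apply: (dilation_ineq_comp_poweR (k := (k * k)%R)); first lra.
  by apply: powR_ln_div; lra.
have -> : ((2 * K)^-1 = (2 * k)^-1 * (2 * k)^-1)%R.
  by rewrite -invfM /K; congr GRing.inv; ring.
by apply: dilation_ineq_sqr => //; rewrite invr_ge0; lra.
Qed.
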